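(* Let $(E,\|\cdot\|)$ be a normed space over $K$ and let $A$ be a local compactoid in $E$. If the linear span $[A]$ is infinite-dimensional, then $[A]$, with the norm restricted from $E$, is not a Banach space.
   Context: $K$ is a field complete with respect to a non-trivial non-archimedean absolute value, $B_K=\{x\in K:|x|\le1\}$; norms are non-archimedean. Absolutely convex = $B_K$-submodule; $[X]$ is the linear span of $X$. An absolutely convex $A\subseteq E$ is a local compactoid in $E$ if for every zero neighbourhood $U$ there is a finite $S\subseteq E$ with $A\subseteq U+[S]$. *)

From mathcomp Require Import all_boot all_order all_algebra.
From mathcomp Require Import reals.
Set Implicit Arguments. Unset Strict Implicit. Unset Printing Implicit Defensive.
Import Order.TTheory GRing.Theory Num.Theory.
Local Open Scope ring_scope.

Section NonArch.
Variable R : realType.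

Definition nonarch_abs (K : fieldType) (abs : K -> R) : Prop :=
  [/\ forall x, 0 <= abs x,
      forall x, abs x = 0 <-> x = 0,
      forall x y, abs (x * y) = abs x * abs y &
      forall x y, abs (x + y) <= Num.max (abs x) (abs y)].

Definition nontrivial_abs (K : fieldType) (abs : K -> R) : Prop :=
  exists x : K, abs x != 0 /\ abs x != 1.

Definition complete_abs (K : fieldType) (abs : K -> R) : Prop :=
  forall u : nat -> K,
    (forall e : R, 0 < e -> exists N : nat, forall m n : nat,
        (N <= m)%N -> (N <= n)%N -> abs (u m - u n) < e) ->
    exists l : K, forall e : R, 0 < e -> exists N : nat, forall n : nat,
        (N <= n)%N -> abs (u n - l) < e.

Variables (K : fieldType) (abs : K -> R) (E : lmodType K) (nrm : E -> R).

Definition nonarch_norm : Prop :=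
  [/\ forall x, 0 <= nrm x,
      forall x, nrm x = 0 <-> x = 0,
      forall (a : K) x, nrm (a *: x) = abs a * nrm x &
      forall x y, nrm (x + y) <= Num.max (nrm x) (nrm y)].

Definition lspan (X : E -> Prop) : E -> Prop :=
  fun x => exists (n : nat) (v : 'I_n -> E) (c : 'I_n -> K),
    (forall i, X (v i)) /\ x = \sum_(i < n) c i *: v i.

(** absolutely convex = B_K-submodule, B_K = {a | abs a <= 1} *)
Definition abs_convex (A : E -> Prop) : Prop :=
  [/\ A 0,
      forall x y, A x -> A y -> A (x + y) &
      forall (a : K) x, abs a <= 1 -> A x -> A (a *: x)].

Definition zero_nbhd (U : E -> Prop) : Prop :=
  exists e : R, 0 < e /\ forall x, nrm x < e -> U x.

Definition finite_set (S : E -> Prop) : Prop :=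
  exists s : seq E, forall x, S x <-> x \in s.

Definition local_compactoid (A : E -> Prop) : Prop :=
  abs_convex A /\
  forall U, zero_nbhd U -> exists S, finite_set S /\
    forall a, A a -> exists u y, U u /\ lspan S y /\ a = u + y.

Definition finite_dim (V : E -> Prop) : Prop :=
  exists S, finite_set S /\ forall x, V x -> lspan S x.

Definition banach_subspace (V : E -> Prop) : Prop :=
  forall u : nat -> E, (forall n, V (u n)) ->
    (forall e : R, 0 < e -> exists N : nat, forall m n : nat,
        (N <= m)%N -> (N <= n)%N -> nrm (u m - u n) < e) ->
    exists l : E, V l /\ forall e : R, 0 < e -> exists N : nat, forall n : nat,
        (N <= n)%N -> nrm (u n - l) < e.

End NonArch.

(* Suppose [A] is a Banach space and fix [lam] with [|lam| > 1].  Absolute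
   convexity gives [A] = U_N lam^N A, so by Baire some lam^N A is dense in a
   ball of [A], and since A - A is contained in A, in a ball B of [A] centred
   at 0.  Cover A by a small ball plus the span of a finite S in E; K being
   complete, coordinates on [S] are continuous, so the coefficients involved
   are bounded.  Replace the vectors of S one at a time by vectors of [A]: the
   leading coordinate is cancelled by a vector of [A] whose leading coordinate
   is within a factor t < 1 of its supremum, which costs only a factor 1/t.
   This gives B in |lam|^-1 B + [T] for a finite T in [A].  Iterating, B lies
   in the closure of [T], which is closed; hence [A] = [T] is finite-dimensional. *)

From mathcomp Require Import all_boot all_order all_algebra.
From mathcomp Require Import boolp reals ring lra.
Set Implicit Arguments. Unset Strict Implicit. Unset Printing Implicit Defensive.
Import Order.TTheory GRing.Theory Num.Theory.
Local Open Scope ring_scope.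

Section LinearCombinations.
Variables (K : fieldType) (E : lmodType K).

Fixpoint lcomb (e : seq E) (c : nat -> K) : E :=
  if e is x :: e' then c 0%N *: x + lcomb e' (fun i => c i.+1) else 0.

Definition span_seq (e : seq E) (x : E) : Prop := exists c, x = lcomb e c.

Definition is_subspace (V : E -> Prop) : Prop :=
  V 0 /\ forall a x y, V x -> V y -> V (a *: x + y).

Lemma lcomb0 e : lcomb e (fun=> 0) = 0.
Proof. by elim: e => [|x e IH] //=; rewrite IH scale0r addr0. Qed.

Lemma lcombD e c d : lcomb e (fun i => c i + d i) = lcomb e c + lcomb e d.
Proof.
elim: e c d => [|x e IH] c d /=; first by rewrite addr0.
by rewrite IH scalerDl addrACA.
Qed.

Lemma lcombZ e a c : lcomb e (fun i => a * c i) = a *: lcomb e c.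
Proof.
elim: e c => [|x e IH] c /=; first by rewrite scaler0.
by rewrite scalerDr IH scalerA.
Qed.

Lemma lcombB e c d : lcomb e (fun i => c i - d i) = lcomb e c - lcomb e d.
Proof.
rewrite -scaleN1r -lcombZ -lcombD; congr lcomb; apply: funext => i.
by rewrite mulN1r.
Qed.

Section Subspace.
Variables (V : E -> Prop) (hV : is_subspace V).

Lemma subspace0 : V 0. Proof. by case: hV. Qed.

Lemma subspaceZ a x : V x -> V (a *: x).
Proof. by move=> Vx; rewrite -[_ *: x]addr0; apply: hV.2 => //; apply: subspace0. Qed.

Lemma subspaceD x y : V x -> V y -> V (x + y).
Proof. by move=> Vx Vy; rewrite -[x]scale1r; apply: hV.2. Qed.

Lemma subspaceB x y : V x -> V y -> V (x - y).
Proof. by move=> Vx Vy; rewrite addrC -scaleN1r; apply: hV.2. Qed.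

Lemma span_seq_min e x : (forall y, y \in e -> V y) -> span_seq e x -> V x.
Proof.
elim: e x => [|y e IH] x eV [c ->] /=; first exact: subspace0.
apply: hV.2; first by apply: eV; rewrite mem_head.
by apply: IH; [move=> z ze; apply: eV; rewrite in_cons ze orbT | exists (fun i => c i.+1)].
Qed.

Lemma lspan_min (X : E -> Prop) x : (forall y, X y -> V y) -> lspan X x -> V x.
Proof.
move=> XV [n [v [c [Xv ->]]]].
by apply: (big_ind V) => [|y z|i _]; [exact: subspace0 | exact: subspaceD |
  apply: subspaceZ; apply: XV].
Qed.

End Subspace.

Lemma subspace_span_seq e : is_subspace (span_seq e).
Proof.
split; first by exists (fun=> 0); rewrite lcomb0.
move=> a _ _ [c ->] [d ->]; exists (fun i => a * c i + d i).
by rewrite lcombD lcombZ.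
Qed.

Lemma span_seq_cons x e z :
  span_seq (x :: e) z <-> exists a y, span_seq e y /\ z = a *: x + y.
Proof.
split=> [[c ->]|[a [y [[c ->] ->]]]]; last by exists (fun i => if i is j.+1 then c j else a).
by exists (c 0%N), (lcomb e (fun i => c i.+1)); split => //; eexists.
Qed.

Lemma span_seq_mem e x : x \in e -> span_seq e x.
Proof.
elim: e => [|y e IH] //; rewrite in_cons => /orP [/eqP ->|/IH ex].
  apply/span_seq_cons; exists 1, 0; rewrite scale1r addr0; split => //.
  exact: subspace0 (subspace_span_seq e).
by apply/span_seq_cons; exists 0, x; rewrite scale0r add0r.
Qed.

Lemma subspace_lspan (X : E -> Prop) : is_subspace (lspan X).
Proof.
split; first by exists 0%N, (fun _ => 0), (fun _ => 0); split; [case | rewrite big_ord0].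
move=> a _ _ [n [v [c [Xv ->]]]] [m [w [d [Xw ->]]]].
exists (n + m)%N, (fun i => match split i with inl j => v j | inr j => w j end).
exists (fun i => match split i with inl j => a * c j | inr j => d j end).
split; first by move=> i; case: (split i).
rewrite big_split_ord scaler_sumr; congr (_ + _); apply: eq_bigr => i _.
  by have := unsplitK (inl i : 'I_n + 'I_m) => /= ->; rewrite scalerA.
by have := unsplitK (inr i : 'I_n + 'I_m) => /= ->.
Qed.

Lemma lspan_mem (X : E -> Prop) x : X x -> lspan X x.
Proof.
by move=> Xx; exists 1%N, (fun _ => x), (fun _ => 1); rewrite big_ord1 scale1r.
Qed.

End LinearCombinations.

Lemma bernoulli (R : realDomainType) (x : R) n :
  -1 <= x -> 1 + n%:R * x <= (1 + x) ^+ n.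
Proof.
move=> hx; elim: n => [|n IH]; first by rewrite mul0r addr0 expr0.
have n_ge0 : 0 <= (n%:R : R) by apply: ler0n.
have step : (1 + x) * (1 + n%:R * x) <= (1 + x) ^+ n.+1.
  by rewrite exprS; apply: ler_wpM2l => //; lra.
apply: le_trans step; rewrite -natr1.
have -> : (1 + x) * (1 + n%:R * x) = 1 + (n%:R + 1) * x + n%:R * x ^+ 2 by ring.
by have := mulr_ge0 n_ge0 (sqr_ge0 x); lra.
Qed.

Section ArchimedeanPowers.
Variables (R : archiRealFieldType) (q : R).
Hypothesis q_gt1 : 1 < q.

Lemma expr_unbounded M : exists N, forall n, (N <= n)%N -> M < q ^+ n.
Proof.
have q1_gt0 : 0 < q - 1 by rewrite subr_gt0.
exists (Num.bound (`|M| / (q - 1))) => n Nn.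
have := archi_boundP (divr_ge0 (normr_ge0 M) (ltW q1_gt0)).
rewrite ltr_pdivrMr // => MN.
have Nn' : (Num.bound (`|M| / (q - 1)))%:R <= n%:R :> R by rewrite ler_nat.
have bern : 1 + n%:R * (q - 1) <= q ^+ n.
  by have := @bernoulli R (q - 1) n; rewrite [1 + (q - 1)]addrC subrK; apply; lra.
have := ler_norm M; have := ler_wpM2r (ltW q1_gt0) Nn'; lra.
Qed.

Lemma expr_inv_small e : 0 < e -> exists N, forall n, (N <= n)%N -> (q ^+ n)^-1 < e.
Proof.
move=> e_gt0; have [N hN] := expr_unbounded e^-1; exists N => n Nn.
rewrite -[e]invrK ltf_pV2 ?posrE ?invr_gt0 ?exprn_gt0 //; last exact: lt_trans ltr01 q_gt1.
exact: hN.
Qed.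

End ArchimedeanPowers.

Lemma exists_pow_ge_half (R : realFieldType) n :
  exists t : R, [/\ 0 < t, t < 1 & 2^-1 <= t ^+ n].
Proof.
have n2_gt0 : 0 < (n.+1%:R * 2 : R) by rewrite mulr_gt0 ?ltr0Sn.
pose h := (n.+1%:R * 2 : R)^-1.
have h_gt0 : 0 < h by rewrite invr_gt0.
have hn : h * ((n%:R + 1) * 2) = 1 by rewrite natr1 mulVf ?gt_eqF.
have n_ge0 : 0 <= (n%:R : R) by apply: ler0n.
exists (1 - h); split; [nra | lra |].
have := @bernoulli R (- h) n; rewrite mulrN; nra.
Qed.

Lemma mulfXV (F : fieldType) (x : F) n : x != 0 -> x ^+ n * x^-1 ^+ n = 1.
Proof. by move=> x0; rewrite -exprMn mulfV // expr1n. Qed.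

Section NonArchimedean.
Variables (R : realType) (K : fieldType) (abs : K -> R).
Hypothesis habs : nonarch_abs abs.

Definition cvg_to (V : zmodType) (N : V -> R) (u : nat -> V) (l : V) : Prop :=
  forall e : R, 0 < e -> exists M, forall n, (M <= n)%N -> N (u n - l) < e.

Lemma abs_ge0 x : 0 <= abs x. Proof. by case: habs. Qed.
Lemma abs_eq0 x : abs x = 0 <-> x = 0. Proof. by case: habs. Qed.
Lemma absM x y : abs (x * y) = abs x * abs y. Proof. by case: habs. Qed.
Lemma abs_ultra x y : abs (x + y) <= Num.max (abs x) (abs y). Proof. by case: habs. Qed.

Lemma abs0 : abs 0 = 0. Proof. exact/abs_eq0. Qed.

Lemma abs_gt0 x : x != 0 -> 0 < abs x.
Proof. by move=> x0; rewrite lt_def abs_ge0 andbT; apply: contra x0 => /eqP/abs_eq0->. Qed.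

Lemma abs1 : abs 1 = 1.
Proof.
have n0 : abs 1 != 0 by rewrite gt_eqF ?abs_gt0 ?oner_neq0.
by apply: (mulfI n0); rewrite -absM !mulr1.
Qed.

Lemma absN1 : abs (-1) = 1.
Proof.
have := absM (-1) (-1); rewrite mulrNN mulr1 abs1 => /esym/eqP.
by rewrite -expr2 sqrf_eq1 => /orP[/eqP //|/eqP h]; have := abs_ge0 (-1); rewrite h; lra.
Qed.

Lemma absN x : abs (- x) = abs x. Proof. by rewrite -mulN1r absM absN1 mul1r. Qed.

Lemma absV x : abs x^-1 = (abs x)^-1.
Proof.
have [->|x0] := eqVneq x 0; first by rewrite invr0 abs0 invr0.
by apply: (mulfI (lt0r_neq0 (abs_gt0 x0))); rewrite -absM !mulfV ?abs1 ?lt0r_neq0 ?abs_gt0.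
Qed.

Lemma absX x n : abs (x ^+ n) = abs x ^+ n.
Proof. by elim: n => [|n IH]; rewrite ?expr0 ?abs1 // !exprS absM IH. Qed.

Lemma absB_le x y e : abs x <= e -> abs y <= e -> abs (x - y) <= e.
Proof. by move=> xe ye; apply: le_trans (abs_ultra _ _) _; rewrite ge_max absN xe. Qed.

Lemma exists_abs_gt1 : nontrivial_abs abs -> exists lam, 1 < abs lam.
Proof.
move=> [x [x0 x1]]; have xn0 : x != 0 by apply: contra x0 => /eqP->; rewrite abs0.
case: (ltrgtP (abs x) 1) => [lt1|gt1|eq1]; last by rewrite eq1 eqxx in x1.
  by exists x^-1; rewrite absV invf_gt1 ?abs_gt0.
by exists x.
Qed.

Lemma abs_gt1_neq0 lam : 1 < abs lam -> lam != 0.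
Proof. by apply: contraTneq => ->; rewrite abs0 ltr10. Qed.

Variables (E : lmodType K) (nrm : E -> R).
Hypothesis hnrm : nonarch_norm abs nrm.

Lemma nrm_ge0 x : 0 <= nrm x. Proof. by case: hnrm. Qed.
Lemma nrm_eq0 x : nrm x = 0 <-> x = 0. Proof. by case: hnrm. Qed.
Lemma nrmZ a x : nrm (a *: x) = abs a * nrm x. Proof. by case: hnrm. Qed.
Lemma nrm_ultra x y : nrm (x + y) <= Num.max (nrm x) (nrm y). Proof. by case: hnrm. Qed.

Lemma nrm0 : nrm 0 = 0. Proof. exact/nrm_eq0. Qed.
Lemma nrmN x : nrm (- x) = nrm x. Proof. by rewrite -scaleN1r nrmZ absN1 mul1r. Qed.
Lemma nrmB x y : nrm (x - y) = nrm (y - x). Proof. by rewrite -nrmN opprB. Qed.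

Lemma nrmD_lt x y e : nrm x < e -> nrm y < e -> nrm (x + y) < e.
Proof. by move=> xe ye; apply: le_lt_trans (nrm_ultra x y) _; rewrite gt_max xe. Qed.

Lemma nrmD_le x y e : nrm x <= e -> nrm y <= e -> nrm (x + y) <= e.
Proof. by move=> xe ye; apply: le_trans (nrm_ultra x y) _; rewrite ge_max xe. Qed.

Lemma nrmB_lt x y e : nrm x < e -> nrm y < e -> nrm (x - y) < e.
Proof. by move=> xe ye; apply: nrmD_lt; rewrite ?nrmN. Qed.

Lemma nrm_lt_all0 x : (forall d : R, 0 < d -> nrm x < d) -> x = 0.
Proof.
move=> small; apply/nrm_eq0/eqP; rewrite eq_le nrm_ge0 andbT leNgt.
by apply/negP => /small; rewrite ltxx.
Qed.

Definition closed_pred (P : E -> Prop) : Prop :=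
  forall x, (forall d : R, 0 < d -> exists y, P y /\ nrm (x - y) < d) -> P x.

Definition coord_bounded (b : seq E) : Prop :=
  exists C : R, 0 < C /\
    forall c i, (i < size b)%N -> abs (c i) <= C * nrm (lcomb b c).

Lemma coord_bounded_behead x b : coord_bounded (x :: b) -> coord_bounded b.
Proof.
move=> [C [C_gt0 bC]]; exists C; split => // c i ib.
by have := bC (fun i => if i is j.+1 then c j else 0) i.+1 ib; rewrite /= scale0r add0r.
Qed.

Lemma far_from_closed P x : closed_pred P -> ~ P x ->
  exists eta : R, 0 < eta /\ forall y, P y -> eta <= nrm (x - y).
Proof.
move=> Pc nPx; apply: contrapT => nfar; apply/nPx/Pc => d d_gt0.
apply: contrapT => nnear; apply: nfar; exists d; split => // y Py.
by rewrite leNgt; apply/negP => xy; apply: nnear; exists y.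
Qed.

Definition approx_rep e (eps M : R) x u c : Prop :=
  [/\ nrm u < eps, forall i, (i < size e)%N -> abs (c i) <= M & x = u + lcomb e c].

Definition approx_by (X : E -> Prop) e (eps M : R) : Prop :=
  forall x, X x -> exists u c, approx_rep e eps M x u c.

Lemma approx_by_mono X e eps eps' M M' : eps <= eps' -> M <= M' ->
  approx_by X e eps M -> approx_by X e eps' M'.
Proof.
move=> le_eps le_M Xe x /Xe [u [c [u_lt c_le ->]]]; exists u, c; split => //.
  exact: lt_le_trans le_eps.
by move=> i /c_le /le_trans; apply.
Qed.

Section Transfer.
Variables (F : E -> Prop) (t : R).
Hypotheses (hF : is_subspace F) (t_gt0 : 0 < t) (t_lt1 : t < 1).

Let le_divt y : 0 <= y -> y <= y / t.
Proof. by move=> y_ge0; rewrite ler_pdivlMr // ler_piMr // ltW. Qed.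

Lemma exists_near_max_head X x0 e eps M :
  (exists x u c, [/\ X x, approx_rep (x0 :: e) eps M x u c & c 0%N != 0]) ->
  exists a ua ca, [/\ X a, approx_rep (x0 :: e) eps M a ua ca, ca 0%N != 0 &
    forall x u c, X x -> approx_rep (x0 :: e) eps M x u c -> abs (c 0%N / ca 0%N) <= t^-1].
Proof.
move=> [x1 [u1 [c1 [Xx1 rep1 c10]]]].
pose heads r := exists x u c, [/\ X x, approx_rep (x0 :: e) eps M x u c & r = abs (c 0%N)].
have heads_sup : classical_sets.has_sup heads.
  split; first by exists (abs (c1 0%N)), x1, u1, c1.
  by exists M => _ /= [x [u [c [_ [_ c_le _] ->]]]]; apply: c_le.
pose s := sup heads.
have s_gt0 : 0 < s.
  by apply: lt_le_trans (abs_gt0 c10) _; apply: sup_upper_bound => //; exists x1, u1, c1.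
(* The supremum need not be attained; [t < 1] leaves room to approach it. *)
have t1_gt0 : 0 < 1 - t by rewrite subr_gt0.
have [_ [a [ua [ca [Xa rep ->]]]] near_s] := sup_adherent (mulr_gt0 t1_gt0 s_gt0) heads_sup.
have ts_lt : t * s < abs (ca 0%N).
  by move: near_s; rewrite -/s mulrBl mul1r opprB addrCA subrr addr0.
have ca0_gt0 : 0 < abs (ca 0%N) by apply: lt_trans ts_lt; rewrite mulr_gt0.
exists a, ua, ca; split => //; first by apply: contraTneq ca0_gt0 => ->; rewrite abs0 ltxx.
move=> x u c Xx repx; rewrite absM absV ler_pdivrMr //.
apply: le_trans (_ : s <= _); first by apply: sup_upper_bound => //; exists x, u, c.
by rewrite ler_pdivlMl // ltW.
Qed.

Lemma approx_by_behead_nz X x0 e eps M : 0 <= eps -> 0 <= M ->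
  (forall x, X x -> F x) -> approx_by X (x0 :: e) eps M ->
  (exists x u c, [/\ X x, approx_rep (x0 :: e) eps M x u c & c 0%N != 0]) ->
  exists a X1, [/\ F a, forall x, X1 x -> F x, approx_by X1 e (eps / t) (M / t) &
    forall x, X x -> exists b x1, X1 x1 /\ x = x1 + b *: a].
Proof.
move=> eps_ge0 M_ge0 XF Xe /exists_near_max_head.
move=> [a [ua [ca [Xa [ua_lt ca_le ha] ca0 beta_le]]]].
pose beta c := c 0%N / ca 0%N.
pose X1 z := exists x u c, [/\ X x, approx_rep (x0 :: e) eps M x u c & z = x - beta c *: a].
exists a, X1; split; first exact: XF.
- move=> _ [x [u [c [Xx _ ->]]]].
  exact (subspaceB hF (XF _ Xx) (subspaceZ hF _ (XF _ Xa))).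
- move=> _ [x [u [c [Xx rep ->]]]]; have beta_t := beta_le _ _ _ Xx rep.
  case: rep => u_lt c_le hx.
  exists (u - beta c *: ua), (fun i => c i.+1 - beta c * ca i.+1); split.
  + apply: nrmB_lt; first exact: lt_le_trans u_lt (le_divt eps_ge0).
    rewrite nrmZ mulrC; apply: le_lt_trans (ler_wpM2l (nrm_ge0 _) beta_t) _.
    by rewrite ltr_pM2r ?invr_gt0.
  + move=> i i_lt; apply: absB_le; first exact: le_trans (c_le i.+1 i_lt) (le_divt M_ge0).
    by rewrite absM mulrC ler_pM ?abs_ge0 //; apply: ca_le.
  + have beta_ca : beta c * ca 0%N = c 0%N by rewrite /beta divfK.
    rewrite hx ha /= lcombB lcombZ !scalerDr scalerA beta_ca.
    set p := c 0%N *: x0; set l := lcomb e _; set q := beta c *: lcomb e _.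
    by rewrite !opprD addrACA [p + l + _]addrACA subrr add0r.
- move=> x Xx; have [u [c rep]] := Xe x Xx.
  by exists (beta c), (x - beta c *: a); split; [exists x, u, c | rewrite subrK].
Qed.

Lemma approx_by_behead X x0 e eps M : 0 <= eps -> 0 <= M ->
  (forall x, X x -> F x) -> approx_by X (x0 :: e) eps M ->
  exists a X1, [/\ F a, forall x, X1 x -> F x, approx_by X1 e (eps / t) (M / t) &
    forall x, X x -> exists b x1, X1 x1 /\ x = x1 + b *: a].
Proof.
move=> eps_ge0 M_ge0 XF Xe.
have [nz|all_zero] := pselect (exists x u c,
  [/\ X x, approx_rep (x0 :: e) eps M x u c & c 0%N != 0]).
  exact: approx_by_behead_nz eps_ge0 M_ge0 XF Xe nz.
exists 0, X; split => //; first exact: subspace0.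
  apply: approx_by_mono (le_divt eps_ge0) (le_divt M_ge0) _ => x Xx.
  have [u [c rep]] := Xe x Xx.
  have c0 : c 0%N = 0 by apply: contrapT => /eqP c0; apply: all_zero; exists x, u, c.
  case: rep => u_lt c_le hx; exists u, (fun i => c i.+1); split => // [i|].
    exact: c_le i.+1.
  by rewrite hx /= c0 scale0r add0r.
by move=> x Xx; exists 0, x; rewrite scaler0 addr0.
Qed.

Lemma approx_by_transfer e X eps M : 0 <= eps -> 0 <= M ->
  (forall x, X x -> F x) -> approx_by X e eps M ->
  exists T, (forall y, y \in T -> F y) /\ forall x, X x ->
    exists u y, [/\ nrm u < eps / t ^+ size e, span_seq T y & x = u + y].
Proof.
elim: e X eps M => [|x0 e IH] X eps M eps_ge0 M_ge0 XF Xe.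
  exists [::]; split => // x /Xe [u [c [u_lt _ ->]]].
  exists u, 0; rewrite expr0 divr1 addr0; split => //.
  exact: subspace0 (subspace_span_seq _).
have [a [X1 [Fa X1F X1e dec]]] := approx_by_behead eps_ge0 M_ge0 XF Xe.
have tV_ge0 : 0 <= t^-1 by rewrite invr_ge0 ltW.
have [T [TF approxT]] :=
  IH X1 (eps / t) (M / t) (mulr_ge0 eps_ge0 tV_ge0) (mulr_ge0 M_ge0 tV_ge0) X1F X1e.
exists (a :: T); split; first by move=> y; rewrite in_cons => /predU1P [->|/TF].
move=> x /dec [b [x1 [/approxT [u [y [u_lt yT ->]]] ->]]].
exists u, (y + b *: a); split; first by rewrite /= exprS invfM mulrA.
  by apply/span_seq_cons; exists b, y; rewrite addrC.
by rewrite addrA.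
Qed.
End Transfer.

Section Baire.
Variable V : E -> Prop.
Hypothesis V_banach : banach_subspace nrm V.

Lemma nested_balls_limit (c : nat -> E) (r : nat -> R) : (forall k, V (c k)) ->
  (forall k, nrm (c k.+1 - c k) < r k) -> (forall k, r k.+1 <= r k / 2) ->
  exists l, V l /\ forall k, nrm (l - c k) < r k.
Proof.
move=> Vc c_step r_step.
have r_gt0 k : 0 < r k by apply: le_lt_trans (nrm_ge0 _) (c_step k).
have r_mono k n : r (k + n)%N <= r k.
  elim: n => [|n IH]; first by rewrite addn0.
  rewrite addnS; apply: le_trans (r_step _) _.
  by apply: le_trans IH; rewrite ler_pdivrMr //; have := r_gt0 (k + n)%N; lra.
have nested k n : nrm (c (k + n)%N - c k) < r k.
  elim: n => [|n IH]; first by rewrite addn0 subrr nrm0.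
  rewrite addnS -(subrK (c (k + n)%N) (c (k + n).+1)) -addrA.
  by apply: nrmD_lt => //; apply: lt_le_trans (c_step _) (r_mono k n).
have r_small k : r k <= r 0%N / 2 ^+ k.
  elim: k => [|k IH]; first by rewrite expr0 divr1.
  by apply: le_trans (r_step k) _; rewrite exprSr invfM mulrA ler_pM2r // invr_gt0.
have two_gt1 : 1 < 2 :> R by lra.
have [l [Vl c_l]] : exists l, V l /\ cvg_to nrm c l.
  apply: V_banach => // e e_gt0.
  have [N hN] := expr_inv_small two_gt1 (divr_gt0 e_gt0 (r_gt0 0%N)).
  have rN_lt : r N < e.
    by apply: le_lt_trans (r_small N) _; rewrite mulrC -ltr_pdivlMr ?r_gt0 // hN.
  exists N => m n /subnKC <- /subnKC <-.
  by rewrite -(subrKA (c N)); apply: nrmD_lt; [|rewrite nrmB];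
    apply: lt_trans (nested _ _) rN_lt.
exists l; split => // k; have [M hM] := c_l _ (r_gt0 k).
rewrite -(subrKA (c (k + M)%N)) -opprB addrC.
by apply: nrmB_lt; [exact: nested | apply: hM; rewrite leq_addl].
Qed.

Lemma baire_dense_ball (P : nat -> E -> Prop) : V 0 ->
  (forall x, V x -> exists N, P N x) ->
  exists N c (r : R), [/\ V c, 0 < r & forall z, V z -> nrm (z - c) < r ->
    forall d : R, 0 < d -> exists p, P N p /\ nrm (z - p) < d].
Proof.
(* Otherwise every ball of V contains a smaller ball at positive distance from
   P N; nesting such balls for N = 0, 1, ... gives a point of V outside every P N. *)
move=> V0 V_cover; apply: contrapT => nowhere_dense.
have escape (Ncr : nat * E * R) : exists q : E * R, V Ncr.1.2 -> 0 < Ncr.2 ->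
    [/\ V q.1, nrm (q.1 - Ncr.1.2) < Ncr.2, 0 < q.2 &
      forall p, P Ncr.1.1 p -> q.2 <= nrm (q.1 - p)].
  case: Ncr => [[N c] r] /=.
  have [[Vc r_gt0]|bad] := pselect (V c /\ 0 < r); last first.
    by exists (0, 0) => Vc r_gt0; case: bad.
  apply: contrapT => nq; apply: nowhere_dense; exists N, c, r; split => // z Vz zc d d_gt0.
  apply: contrapT => nd; apply: nq; exists (z, d) => _ _; split => // p Pp.
  by rewrite leNgt; apply/negP => zp; apply: nd; exists p.
have [f hf] := choice escape.
pose fix s k : E * R := if k is k'.+1 then
  let q := f (k', (s k').1, (s k').2) in (q.1, Num.min ((s k').2 / 2) (q.2 / 2))
  else (0, 1).
have s_inv k : V (s k).1 /\ 0 < (s k).2.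
  elim: k => [|k [Vs s_gt0]] /=; first by split; [exact: V0 | exact: ltr01].
  have [Vq _ q_gt0 _] := hf (k, (s k).1, (s k).2) Vs s_gt0.
  by split => //; rewrite lt_min !divr_gt0.
have s_esc k := hf (k, (s k).1, (s k).2) (s_inv k).1 (s_inv k).2.
have s_step k : nrm ((s k.+1).1 - (s k).1) < (s k).2 by case: (s_esc k).
have s_halve k : (s k.+1).2 <= (s k).2 / 2 by rewrite /= ge_min lexx.
have [l [Vl l_in]] := nested_balls_limit (fun k => (s_inv k).1) s_step s_halve.
have [N PNl] := V_cover l Vl.
have [_ _ q_gt0 q_far] := s_esc N.
have s_q : (s N.+1).2 <= (f (N, (s N).1, (s N).2)).2 / 2 by rewrite /= ge_min lexx orbT.
have := lt_le_trans (l_in N.+1) s_q; rewrite nrmB /=.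
by have := q_far l PNl; lra.
Qed.
End Baire.

Section AbsConvex.
Variables (A : E -> Prop) (lam : K).
Hypotheses (hA : abs_convex abs A) (lam_gt1 : 1 < abs lam).

Let lam_gt0 : 0 < abs lam. Proof. exact: lt_trans ltr01 lam_gt1. Qed.
Let lamXK k : lam ^+ k * lam^-1 ^+ k = 1. Proof. exact/mulfXV/abs_gt1_neq0. Qed.

Let A_le1 a x : abs a <= 1 -> A x -> A (a *: x). Proof. by case: hA => _ _; apply. Qed.

Lemma abs_convexB x y : A x -> A y -> A (x - y).
Proof.
case: hA => _ AD _ Ax Ay; apply: AD => //.
by rewrite -scaleN1r; apply: A_le1; rewrite ?absN1.
Qed.

Lemma lspan_abs_convex x : lspan A x -> exists N a, A a /\ x = lam ^+ N *: a.
Proof.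
pose scaled x := exists N a, A a /\ x = lam ^+ N *: a.
have shrink k b a : abs b <= abs lam ^+ k -> A a -> A ((lam^-1 ^+ k * b) *: a).
  move=> b_le; apply: A_le1; rewrite absM absX absV exprVn.
  by rewrite mulrC ler_pdivrMr ?exprn_gt0 // mul1r.
have scaledZ b y : scaled y -> scaled (b *: y).
  move=> [N [a [Aa ->]]]; have [k hk] := expr_unbounded lam_gt1 (abs b).
  exists (k + N)%N, ((lam^-1 ^+ k * b) *: a); split; first exact/shrink/Aa/ltW/hk.
  by rewrite !scalerA exprD mulrACA lamXK mul1r mulrC.
have lift N M a : (N <= M)%N -> A a -> exists a', A a' /\ lam ^+ N *: a = lam ^+ M *: a'.
  move=> /subnKC <- Aa; exists ((lam^-1 ^+ (M - N) * 1) *: a); split.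
    by apply: shrink; rewrite // abs1 exprn_ege1 // ltW.
  by rewrite mulr1 scalerA exprD -mulrA lamXK mulr1.
move=> Ax; suff hs : is_subspace scaled.
  by apply: (lspan_min hs _ Ax) => a Aa; exists 0%N, a; rewrite scale1r.
split; first by exists 0%N, 0; case: hA => A0 _ _; rewrite scaler0.
move=> b y z /(scaledZ b) [N [a [Aa ->]]] [M [a' [Aa' ->]]].
have [c [Ac ->]] := lift _ _ _ (leq_maxl N M) Aa.
have [c' [Ac' ->]] := lift _ _ _ (leq_maxr N M) Aa'.
by exists (maxn N M), (c + c'); rewrite scalerDr; case: hA => _ AD _; split => //; apply: AD.
Qed.

Lemma banach_dense_ball : banach_subspace nrm (lspan A) ->
  exists (mu : K) (r : R), [/\ mu != 0, 0 < r & forall w, lspan A w -> nrm w < r ->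
    forall d : R, 0 < d -> exists a, A a /\ nrm (w - mu *: a) < d].
Proof.
move=> hban; have span_A := subspace_lspan A.
have [|N [c [r [Ac r_gt0 dense]]]] := baire_dense_ball hban (subspace0 span_A)
  (P := fun N x => exists a, A a /\ x = lam ^+ N *: a).
  by move=> x /lspan_abs_convex [N [a [Aa ->]]]; exists N, a.
exists (lam ^+ N), r; split => //; first exact/expf_neq0/abs_gt1_neq0.
move=> w Aw w_lt d d_gt0.
have [|_ [[a1 [Aa1 ->]] near1]] := dense (c + w) (subspaceD span_A Ac Aw) _ d d_gt0.
  by rewrite addrC addKr.
have [|_ [[a2 [Aa2 ->]] near2]] := dense c Ac _ d d_gt0; first by rewrite subrr nrm0.
exists (a1 - a2); split; first exact: abs_convexB.
have -> : w - lam ^+ N *: (a1 - a2) =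
    (c + w - lam ^+ N *: a1) - (c - lam ^+ N *: a2).
  by rewrite scalerBr -[c + w - _]addrA [c + (w - _)]addrC addrKA opprK addrAC opprB addrA.
exact: nrmB_lt.
Qed.
End AbsConvex.

Section CompleteField.
Hypothesis hcomp : complete_abs abs.

Lemma closed_span_seq b : coord_bounded b -> closed_pred (span_seq b).
Proof.
elim: b => [_|x b IH bb] y0 near_y0.
  suff -> : y0 = 0 by exists (fun=> 0).
  by apply: nrm_lt_all0 => d /near_y0 [_ [[c ->]]]; rewrite subr0.
have [C [C_gt0 bC]] := bb.
have span_b_closed := IH (coord_bounded_behead bb).
have two_gt1 : 1 < 2 :> R by lra.
have near_k k : exists c, nrm (y0 - lcomb (x :: b) c) < (2 ^+ k)^-1.
  have k_gt0 : 0 < (2 ^+ k : R)^-1 by rewrite invr_gt0 exprn_gt0.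
  by have [_ [[c ->] hc]] := near_y0 _ k_gt0; exists c.
have [cc cc_near] := choice near_k.
have [l cc0_l] : exists l, cvg_to abs (fun k => cc k 0%N) l.
  apply: hcomp => e e_gt0; have [N hN] := expr_inv_small two_gt1 (divr_gt0 e_gt0 C_gt0).
  exists N => m n Nm Nn; apply: le_lt_trans (bC (fun i => cc m i - cc n i) 0%N isT) _.
  rewrite lcombB -ltr_pdivlMl // mulrC.
  have -> : lcomb (x :: b) (cc m) - lcomb (x :: b) (cc n) =
      (y0 - lcomb (x :: b) (cc n)) - (y0 - lcomb (x :: b) (cc m)).
    by rewrite opprB [RHS]addrC addrA subrK.
  by apply: nrmB_lt; apply: lt_trans (hN _ _); rewrite ?cc_near.
have : span_seq b (y0 - l *: x).
  apply: span_b_closed => d d_gt0.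
  have x1_gt0 : 0 < nrm x + 1 by have := nrm_ge0 x; lra.
  have [N1 hN1] := cc0_l _ (divr_gt0 d_gt0 x1_gt0).
  have [N2 hN2] := expr_inv_small two_gt1 d_gt0.
  pose k := maxn N1 N2; exists (lcomb b (fun i => cc k i.+1)); split; first by eexists.
  have -> : y0 - l *: x - lcomb b (fun i => cc k i.+1) =
      (y0 - lcomb (x :: b) (cc k)) + (cc k 0%N - l) *: x.
    by rewrite /= scalerBl opprD !addrA [y0 - _ - _ + _]addrAC subrK addrAC.
  apply: nrmD_lt; first exact: lt_trans (cc_near k) (hN2 k (leq_maxr _ _)).
  have := hN1 k (leq_maxl _ _); rewrite nrmZ ltr_pdivlMr // => lt_d.
  by have := nrm_ge0 x; have := abs_ge0 (cc k 0%N - l); nra.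
move=> y_span; apply/span_seq_cons; exists l, (y0 - l *: x).
by rewrite [_ + (_ - _)]addrC subrK.
Qed.

Lemma coord_bounded_cons x b eta : coord_bounded b -> 0 < eta ->
  (forall y, span_seq b y -> eta <= nrm (x - y)) -> coord_bounded (x :: b).
Proof.
move=> [C [C_gt0 bC]] eta_gt0 far.
have head_bound a y : span_seq b y -> abs a * eta <= nrm (a *: x + y).
  have [->|a0] := eqVneq a 0; first by rewrite abs0 mul0r nrm_ge0.
  move=> yb; have -> : a *: x + y = a *: (x - (- a^-1) *: y).
    by rewrite scaleNr opprK scalerDr scalerA mulfV // scale1r.
  rewrite nrmZ ler_wpM2l ?abs_ge0 //; apply: far.
  exact (subspaceZ (subspace_span_seq b) (- a^-1) yb).
pose w := nrm x / eta.
have w_ge0 : 0 <= w by rewrite divr_ge0 ?nrm_ge0 ?ltW.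
have etaV_gt0 : 0 < eta^-1 by rewrite invr_gt0.
exists (eta^-1 + C * (1 + w)); split.
  by have := mulr_ge0 (ltW C_gt0) w_ge0; nra.
move=> c i; set z := lcomb _ c; have z_ge0 := nrm_ge0 z.
have c0_le : abs (c 0%N) <= eta^-1 * nrm z.
  by rewrite mulrC ler_pdivlMr // head_bound //; eexists.
have CDw_ge0 : 0 <= C * (1 + w) * nrm z.
  by rewrite !mulr_ge0 ?addr_ge0 // ltW.
case: i => [_|j j_lt]; first by rewrite mulrDl; apply: le_trans c0_le _; lra.
apply: le_trans (bC (fun i => c i.+1) j j_lt) _.
have tail_le : nrm (lcomb b (fun i => c i.+1)) <= (1 + w) * nrm z.
  have -> : lcomb b (fun i => c i.+1) = z - c 0%N *: x by rewrite /z /= addrC addKr.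
  apply: nrmD_le; first by have := mulr_ge0 w_ge0 z_ge0; lra.
  rewrite nrmN nrmZ; apply: le_trans (ler_wpM2r (nrm_ge0 x) c0_le) _.
  by rewrite /w mulrC mulrA mulrDl mul1r ler_wpDl // mulr_ge0.
apply: le_trans (ler_wpM2l (ltW C_gt0) tail_le) _.
by have := mulr_ge0 (ltW etaV_gt0) z_ge0; rewrite mulrA mulrDl; lra.
Qed.

Lemma exists_coord_bounded_basis s :
  exists b, (forall x, span_seq s x <-> span_seq b x) /\ coord_bounded b.
Proof.
elim: s => [|x s [b [sb bb]]].
  by exists [::]; split => //; exists 1; split => // c i.
have [xb|xNb] := pselect (span_seq b x).
  exists b; split => // z; rewrite span_seq_cons; split.
    move=> [a [y [/sb yb ->]]].
    exact: (subspace_span_seq b).2.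
  move=> zb; exists 0, z; rewrite scale0r add0r; split => //; exact/sb.
have [eta [eta_gt0 far]] := far_from_closed (closed_span_seq bb) xNb.
exists (x :: b); split; last exact: coord_bounded_cons bb eta_gt0 far.
by move=> z; rewrite !span_seq_cons; split => -[a [y [/sb yb ->]]]; exists a, y.
Qed.

Lemma span_seq_closed s : closed_pred (span_seq s).
Proof.
have [b [sb bb]] := exists_coord_bounded_basis s.
move=> x near_x; apply/sb; apply: (closed_span_seq bb) => d /near_x [y [/sb yb xy]].
by exists y.
Qed.

Lemma local_compactoid_approx_by (A X : E -> Prop) (mu : K) (eps rho : R) :
  local_compactoid abs nrm A -> mu != 0 -> 0 < eps -> (forall w, X w -> nrm w < rho) ->
  (forall w, X w -> forall d : R, 0 < d -> exists a, A a /\ nrm (w - mu *: a) < d) ->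
  exists b (M : R), 0 <= M /\ approx_by X b eps M.
Proof.
move=> [_ A_cover] mu0 eps_gt0 X_bnd X_near.
have mu_gt0 := abs_gt0 mu0.
have [S [[s Ss] A_in]] := A_cover (fun x => nrm x < eps / abs mu)
  (ex_intro _ _ (conj (divr_gt0 eps_gt0 mu_gt0) (fun x x_lt => x_lt))).
have [b [sb [C [C_gt0 bC]]]] := exists_coord_bounded_basis s.
have Mb_ge0 : 0 <= C * Num.max rho eps.
  by rewrite mulr_ge0 ?ltW // lt_max eps_gt0 orbT.
exists b, (C * Num.max rho eps); split => // w Xw.
have [a [Aa wa]] := X_near w Xw eps eps_gt0.
have [u [y [u_lt [yS a_eq]]]] := A_in a Aa; rewrite a_eq in wa.
have [c yc] : span_seq b y.
  apply/sb; apply: (lspan_min (subspace_span_seq s) _ yS) => x /Ss.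
  exact: span_seq_mem.
pose v := w - mu *: (u + y) + mu *: u.
have v_lt : nrm v < eps.
  by apply: nrmD_lt => //; rewrite nrmZ mulrC -ltr_pdivlMr.
have w_eq : w = v + lcomb b (fun i => mu * c i).
  by rewrite lcombZ -yc /v -addrA -scalerDr subrK.
exists v, (fun i => mu * c i); split => // i ib.
apply: le_trans (bC (fun i => mu * c i) i ib) _; rewrite ler_wpM2l ?ltW //.
have -> : lcomb b (fun i => mu * c i) = w - v by rewrite {1}w_eq addrC addKr.
by apply: nrmD_lt; rewrite ?nrmN lt_max; [rewrite X_bnd | rewrite v_lt orbT].
Qed.

Lemma span_seq_of_ball_approx (V : E -> Prop) T (r : R) (lam : K) :
  is_subspace V -> (forall y, y \in T -> V y) -> 0 < r -> 1 < abs lam ->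
  (forall w, V w -> nrm w < r -> exists y, span_seq T y /\ nrm (w - y) < r / abs lam) ->
  forall w, V w -> span_seq T w.
Proof.
move=> hV TV r_gt0 lam_gt1 approxT.
have lam_gt0 : 0 < abs lam by apply: lt_trans ltr01 lam_gt1.
have lamXK k : lam ^+ k * lam^-1 ^+ k = 1 by exact/mulfXV/abs_gt1_neq0.
have span_T := subspace_span_seq T.
have iter k w : V w -> nrm w < r ->
    exists y, span_seq T y /\ nrm (w - y) < r / abs lam ^+ k.
  move=> Vw w_lt; elim: k => [|k [y [yT wy]]].
    by exists 0; split; [exact: subspace0 span_T | rewrite subr0 expr0 divr1].
  have Vwy : V (lam ^+ k *: (w - y)).
    exact (subspaceZ hV _ (subspaceB hV Vw (span_seq_min hV TV yT))).
  have [|y' [y'T wy']] := approxT _ Vwy.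
    by rewrite nrmZ absX mulrC -ltr_pdivlMr ?exprn_gt0.
  exists (y + lam^-1 ^+ k *: y'); split.
    exact (subspaceD span_T yT (subspaceZ span_T _ y'T)).
  have -> : w - (y + lam^-1 ^+ k *: y') = lam^-1 ^+ k *: (lam ^+ k *: (w - y) - y').
    by rewrite scalerBr scalerA mulrC lamXK scale1r opprD addrA.
  rewrite nrmZ absX absV exprVn exprSr invfM mulrA [r * _ * _]mulrAC.
  by rewrite [_ * nrm _]mulrC ltr_pM2r ?invr_gt0 ?exprn_gt0.
have ball_T w : V w -> nrm w < r -> span_seq T w.
  move=> Vw w_lt; apply: span_seq_closed => d d_gt0.
  have [k hk] := expr_inv_small lam_gt1 (divr_gt0 d_gt0 r_gt0).
  have [y [yT wy]] := iter k w Vw w_lt.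
  by exists y; split => //; apply: lt_trans wy _; rewrite mulrC -ltr_pdivlMr // hk.
move=> w Vw; have [k hk] := expr_unbounded lam_gt1 (nrm w / r).
have w_small : nrm (lam^-1 ^+ k *: w) < r.
  rewrite nrmZ absX absV exprVn mulrC ltr_pdivrMr ?exprn_gt0 // mulrC -ltr_pdivrMr //.
  exact: hk.
have := subspaceZ span_T (lam ^+ k) (ball_T _ (subspaceZ hV _ Vw) w_small).
by rewrite scalerA lamXK scale1r.
Qed.

Lemma ball_approx_span (A : E -> Prop) (lam : K) :
  abs_convex abs A -> 1 < abs lam ->
  banach_subspace nrm (lspan A) -> local_compactoid abs nrm A ->
  exists (r : R) T, [/\ 0 < r, forall y, y \in T -> lspan A y &
    forall w, lspan A w -> nrm w < r -> exists y, span_seq T y /\ nrm (w - y) < r / abs lam].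
Proof.
move=> hA lam_gt1 hban hcpt.
have lam_gt0 : 0 < abs lam by apply: lt_trans ltr01 lam_gt1.
have [mu [r [mu0 r_gt0 dense]]] := banach_dense_ball hA lam_gt1 hban.
(* The transfer loses the factor [t ^- size b <= 2]. *)
pose eps := r / abs lam / 2.
have eps_gt0 : 0 < eps by rewrite !divr_gt0.
pose X w := lspan A w /\ nrm w < r.
have [b [M [M_ge0 Xb]]] := local_compactoid_approx_by (X := X) (rho := r) hcpt mu0 eps_gt0
  (fun w Xw => Xw.2) (fun w Xw => dense w Xw.1 Xw.2).
have [t [t_gt0 t_lt1 t_half]] := exists_pow_ge_half R (size b).
have [T [TA approxT]] := approx_by_transfer (subspace_lspan A) t_gt0 t_lt1
  (ltW eps_gt0) M_ge0 (fun w (Xw : X w) => Xw.1) Xb.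
exists r, T; split => // w Aw w_lt.
have [u [y [u_lt yT ->]]] := approxT w (conj Aw w_lt).
exists y; split => //; rewrite addrK; apply: lt_le_trans u_lt _.
have tn_gt0 : 0 < t ^+ size b by rewrite exprn_gt0.
have tn_inv : (t ^+ size b)^-1 <= 2.
  by rewrite -[2]invrK lef_pV2 ?posrE ?invr_gt0.
rewrite /eps -[r / abs lam / 2 / _]mulrA ler_piMr ?divr_ge0 ?(ltW r_gt0) ?(ltW lam_gt0) //.
by rewrite mulrC -ler_pdivlMr ?invr_gt0 // div1r invrK.
Qed.
End CompleteField.
End NonArchimedean.

Unset Implicit Arguments.
Theorem mainTheorem11 (R : realType) (K : fieldType) (abs : K -> R)
  (E : lmodType K) (nrm : E -> R) (A : E -> Prop) :
  nonarch_abs abs -> nontrivial_abs abs -> complete_abs abs ->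
  nonarch_norm abs nrm ->
  local_compactoid abs nrm A ->
  ~ finite_dim (lspan A) ->
  ~ banach_subspace nrm (lspan A).
Proof.
move=> habs nontriv hcomp hnrm hcpt hinf hban.
have [lam lam_gt1] := exists_abs_gt1 habs nontriv.
have [r [T [r_gt0 TA ball_T]]] :=
  ball_approx_span habs hnrm hcomp hcpt.1 lam_gt1 hban hcpt.
apply: hinf; exists (fun y => y \in T); split; first by exists T.
have := span_seq_of_ball_approx habs hnrm hcomp (subspace_lspan A) TA r_gt0 lam_gt1 ball_T.
move=> in_span x /in_span xT.
by apply: (span_seq_min (subspace_lspan _) _ xT) => y; apply: lspan_mem.
Qed.
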